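(* Let $f:\mathbb{F}_q^k\to\mathrm{Im}(f)$ and let $d_d<d_f$ be nonnegative integers. Let $L=\max_{\alpha\in\mathrm{Im}(f)}|f^{-1}(\alpha)|$. Then $$r_f(k:d_d,d_f)\ge\frac{(L-1)d_d+(q^k-L)d_f}{q^{k-1}(q-1)}-k.$$
   Context: $d(\cdot,\cdot)$ is Hamming distance; $f^{-1}(\alpha)=\{u:f(u)=\alpha\}$. For integers $0\le d_d\le d_f$, an $(f\!:d_d,d_f)$-FCC with redundancy $r$ is a systematic encoding $\mathfrak{C}_f(u)=(u,p_u)\in\mathbb{F}_q^{k+r}$ with $d(\mathfrak{C}_f(u_1),\mathfrak{C}_f(u_2))\ge d_d$ whenever $u_1\ne u_2$ and $\ge d_f$ whenever $f(u_1)\ne f(u_2)$; $r_f(k:d_d,d_f)$ is the minimum such $r$. *)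

From mathcomp Require Import all_boot all_order all_algebra.
Set Implicit Arguments. Unset Strict Implicit. Unset Printing Implicit Defensive.

Definition hamming (F : eqType) (n : nat) (x y : 'rV[F]_n) : nat :=
  #|[pred i : 'I_n | x ord0 i != y ord0 i]|.

Definition sys_enc (F : Type) (k r : nat) (p : 'rV[F]_k -> 'rV[F]_r)
  (u : 'rV[F]_k) : 'rV[F]_(k + r) := row_mx u (p u).

Definition is_FCC (F : finType) (Y : eqType) (k r : nat) (f : 'rV[F]_k -> Y)
  (dd df : nat) (p : 'rV[F]_k -> 'rV[F]_r) : Prop :=
  forall u1 u2 : 'rV[F]_k,
    (u1 != u2 -> dd <= hamming (sys_enc p u1) (sys_enc p u2)) /\
    (f u1 != f u2 -> df <= hamming (sys_enc p u1) (sys_enc p u2)).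

Definition max_fiber (F : finType) (Y : eqType) (k : nat) (f : 'rV[F]_k -> Y) : nat :=
  \max_(u : 'rV[F]_k) #|[pred v : 'rV[F]_k | f v == f u]|.

From mathcomp Require Import all_boot all_order all_algebra zify ring.
Import GRing.Theory Num.Theory.

(* A Plotkin-type double count of S, the sum of d(c u1, c u2) over all ordered
   pairs of messages, where c u := (u, p u) and N := q^k.  From below: c u is at
   distance >= d_d from the N - 1 other codewords and >= d_f from the
   N - |f^-1(f u)| >= N - L codewords in other fibres, so
   S >= N ((N - 1) d_d + (N - L)(d_f - d_d)) = N ((L - 1) d_d + (N - L) d_f).
   From above: in each of the k + r coordinates, a symbol taking its q values
   with multiplicities m_a separates N^2 - sum m_a^2 <= N^2 (q - 1)/q pairs, by
   Cauchy-Schwarz.  Comparing the two bounds gives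
   (L - 1) d_d + (N - L) d_f <= (k + r) (q - 1) q^(k-1). *)

Lemma sqr_sum_le_card_sum_sqr {T : finType} (h : T -> nat) :
  ((\sum_a h a) ^ 2 <= #|T| * \sum_a h a ^ 2)%N.
Proof.
have -> : ((\sum_a h a) ^ 2 = \sum_a \sum_b h a * h b)%N.
  by rewrite expnS expn1 big_distrl; apply: eq_bigr => a _; rewrite big_distrr.
rewrite -(leq_pmul2l (isT : 0 < 2)%N) big_distrr /=.
have <- : (\sum_a \sum_b (h a ^ 2 + h b ^ 2) = 2 * (#|T| * \sum_a h a ^ 2))%N.
  under eq_bigr do rewrite big_split /= sum_nat_const.
  rewrite big_split /= sum_nat_const -big_distrr /=.
  by rewrite mul2n -addnn.
apply: leq_sum => a _; rewrite big_distrr; apply: leq_sum => b _.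
exact: nat_Cauchy.
Qed.

Lemma sum_nat_of_bool {T : finType} (P : pred T) : (\sum_t (P t : nat) = #|P|)%N.
Proof.
by rewrite -sum1_card [RHS]big_mkcond; apply: eq_bigr => t _; rewrite unfold_in; case: (P t).
Qed.

Section CoordinatePairs.

Context {U A : finType} (g : U -> A).

Lemma sum_card_fibers : (\sum_a #|[pred u | g u == a]| = #|U|)%N.
Proof.
rewrite -sum1_card (partition_big g xpredT) //=.
by apply: eq_bigr => a _; rewrite sum1_card; apply: eq_card => u; rewrite !unfold_in.
Qed.

Lemma sum_eq_pairs :
  (\sum_u1 \sum_u2 (g u1 == g u2 : nat) = \sum_a #|[pred u | g u == a]| ^ 2)%N.
Proof.
transitivity (\sum_u1 #|[pred u | g u == g u1]|)%N.
  by apply: eq_bigr => u1 _; rewrite -sum_nat_of_bool; apply: eq_bigr => u2 _; rewrite eq_sym.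
rewrite (partition_big g xpredT) //=; apply: eq_bigr => a _.
rewrite (eq_bigr (fun _ => #|[pred u | g u == a]|)) => [|u /eqP -> //].
by rewrite sum_nat_const expnS expn1.
Qed.

Lemma sum_eq_add_neq_pairs :
  (\sum_u1 \sum_u2 (g u1 == g u2 : nat) + \sum_u1 \sum_u2 (g u1 != g u2 : nat)
   = #|U| ^ 2)%N.
Proof.
rewrite -big_split expnS expn1 -sum_nat_const; apply: eq_bigr => u1 _.
by rewrite -big_split -sum1_card; apply: eq_bigr => u2 _; case: (g u1 == g u2).
Qed.

Lemma card_mul_sum_neq_pairs_le :
  (#|A| * \sum_u1 \sum_u2 (g u1 != g u2 : nat) <= (#|A| - 1) * #|U| ^ 2)%N.
Proof.
have := sqr_sum_le_card_sum_sqr (fun a => #|[pred u | g u == a]|).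
rewrite sum_card_fibers -sum_eq_pairs.
have := sum_eq_add_neq_pairs; set E := (\sum_u1 _)%N; set D := (\sum_u1 _)%N.
nia.
Qed.

End CoordinatePairs.

Lemma card_mul_sum_hamming_le {U F : finType} {n : nat} (c : U -> 'rV[F]_n) :
  (#|F| * \sum_u1 \sum_u2 hamming (c u1) (c u2) <= n * ((#|F| - 1) * #|U| ^ 2))%N.
Proof.
have -> : (\sum_u1 \sum_u2 hamming (c u1) (c u2)
           = \sum_(i < n) \sum_u1 \sum_u2 (c u1 ord0 i != c u2 ord0 i : nat))%N.
  rewrite [RHS]exchange_big; apply: eq_bigr => u1 _.
  by rewrite [RHS]exchange_big; apply: eq_bigr => u2 _; rewrite /hamming -sum_nat_of_bool.
rewrite big_distrr -[n in (_ <= n * _)%N]card_ord -sum_nat_const.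
by apply: leq_sum => i _; exact: (card_mul_sum_neq_pairs_le (fun u => c u ord0 i)).
Qed.

Section FCCDistances.

Context {F : finType} {Y : eqType} {k r : nat} {f : 'rV[F]_k -> Y}.
Context {dd df : nat} {p : 'rV[F]_k -> 'rV[F]_r}.
Hypotheses (fcc : is_FCC f dd df p) (le_dd_df : (dd <= df)%N).

Lemma is_FCC_hamming_ge (u v : 'rV[F]_k) :
  ((u != v) * dd + (f u != f v) * (df - dd) <= hamming (sys_enc p u) (sys_enc p v))%N.
Proof.
have [Hdd Hdf] := fcc u v.
have [Efuv | Nfuv] := eqVneq (f u) (f v).
  by rewrite mul0n addn0; have [//|/Hdd] := eqVneq u v; rewrite mul1n.
have Nuv : u != v by apply: contraNneq Nfuv => ->.
by rewrite Nuv !mul1n subnKC //; apply: Hdf.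
Qed.

Lemma is_FCC_row_sum_ge (u : 'rV[F]_k) :
  ((#|'rV[F]_k| - 1) * dd + (#|'rV[F]_k| - #|[pred v | f v == f u]|) * (df - dd)
   <= \sum_v hamming (sys_enc p u) (sys_enc p v))%N.
Proof.
apply: (@leq_trans (\sum_v ((u != v) * dd + (f u != f v) * (df - dd))));
  last by apply: leq_sum => v _; apply: is_FCC_hamming_ge.
rewrite big_split -!big_distrl !sum_nat_of_bool /=.
have -> : #|(fun v => u != v)| = (#|'rV[F]_k| - 1)%N.
  by rewrite subn1 -(cardC1 u); apply: eq_card => v; rewrite !inE eq_sym.
have -> : #|(fun v => f u != f v)| = (#|'rV[F]_k| - #|[pred v | f v == f u]|)%N.
  rewrite -(cardC [pred v | f v == f u]) addKn.
  by apply: eq_card => v; rewrite !inE eq_sym.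
by [].
Qed.

Lemma is_FCC_sum_hamming_ge :
  (#|'rV[F]_k| * ((#|'rV[F]_k| - 1) * dd + (#|'rV[F]_k| - max_fiber f) * (df - dd))
   <= \sum_u \sum_v hamming (sys_enc p u) (sys_enc p v))%N.
Proof.
rewrite -sum_nat_const; apply: leq_sum => u _.
apply: leq_trans (is_FCC_row_sum_ge u).
by rewrite leq_add2l leq_mul2r leq_sub2l ?orbT // (leq_bigmax u).
Qed.

Lemma max_fiber_gt0 : (0 < #|'rV[F]_k|)%N -> (0 < max_fiber f)%N.
Proof.
case/card_gt0P=> u _.
have /card_gt0P fiber_gt0 : exists v, v \in [pred v | f v == f u] by exists u; rewrite inE.
exact: leq_trans fiber_gt0 (leq_bigmax u).
Qed.

Lemma max_fiber_le_card : (max_fiber f <= #|'rV[F]_k|)%N.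
Proof. by apply/bigmax_leqP => u _; apply: max_card. Qed.

Lemma is_FCC_redundancy_bound : (0 < #|F|)%N ->
  ((max_fiber f - 1) * dd + (#|F| ^ k - max_fiber f) * df
   <= (k + r) * (#|F| ^ (k - 1) * (#|F| - 1)))%N.
Proof.
set q := #|F|; set L := max_fiber f => q_gt0.
have cardU : #|'rV[F]_k| = (q ^ k)%N by rewrite card_mx mul1n.
have N_gt0 : (0 < q ^ k)%N by rewrite expn_gt0 q_gt0.
have L_gt0 : (0 < L)%N by apply: max_fiber_gt0; rewrite cardU.
have L_le : (L <= q ^ k)%N by rewrite -cardU max_fiber_le_card.
have lower := is_FCC_sum_hamming_ge; rewrite cardU -/L in lower.
have upper := card_mul_sum_hamming_le (sys_enc p); rewrite cardU -/q in upper.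
set S := (\sum_u _)%N in lower upper.
have -> : ((L - 1) * dd + (q ^ k - L) * df = (q ^ k - 1) * dd + (q ^ k - L) * (df - dd))%N.
  have -> : (q ^ k - 1 = L - 1 + (q ^ k - L))%N by lia.
  by rewrite -{1}(subnKC le_dd_df) mulnDr mulnDl addnA.
set X := (_ + _)%N in lower *.
have qX_le : (q * X <= (k + r) * ((q - 1) * q ^ k))%N.
  rewrite -(leq_pmul2l N_gt0) mulnCA.
  apply: (leq_trans (leq_mul (leqnn q) lower)); apply: (leq_trans upper).
  by apply: eq_leq; ring.
have qk_le : (q ^ k <= q * q ^ (k - 1))%N by rewrite -expnS leq_pexp2l //; lia.
rewrite -(leq_pmul2l q_gt0); apply: (leq_trans qX_le).
have -> : (q * ((k + r) * (q ^ (k - 1) * (q - 1))) = (k + r) * ((q - 1) * (q * q ^ (k - 1))))%N.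
  by ring.
by rewrite !leq_mul2l qk_le !orbT.
Qed.

End FCCDistances.

Theorem theorem11 (F : finFieldType) (Y : eqType) (k : nat)
  (f : 'rV[F]_k -> Y) (dd df : nat) (Hd : (dd < df)%N)
  (r : nat) (p : 'rV[F]_k -> 'rV[F]_r) (Hp : is_FCC f dd df p) :
  let q := #|F| in
  let L := max_fiber f in
  ((((L - 1) * dd + (q ^ k - L) * df)%:R / ((q ^ (k - 1) * (q - 1))%:R) - k%:R
     : rat) <= r%:R)%R.
Proof.
cbv zeta.
have q_gt1 : (1 < #|F|)%N by apply: card_finNzRing_gt1.
have bound := is_FCC_redundancy_bound Hp (ltnW Hd) (ltnW q_gt1).
have den_gt0 : (0 < #|F| ^ (k - 1) * (#|F| - 1))%N.
  by rewrite muln_gt0 expn_gt0 subn_gt0 q_gt1 ltnW.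
by rewrite lerBlDr ler_pdivrMr ?ltr0n // -natrD -natrM ler_nat [(r + k)%N]addnC.
Qed.
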